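(* With $\mathcal{L}^\ddagger$, $\Gamma_T$, $\Gamma_L$ as defined below and $\Gamma=2\Gamma_T+\Gamma_L$, if $e^{t\mathcal{L}^\ddagger}$ is a unital Schwarz map for every $t\ge 0$, then $\Gamma_T\le\frac23\Gamma$ and $\Gamma_L\le\frac23\Gamma$; in particular $4\Gamma_T\ge\Gamma_L$.
   Context: For $\omega,\gamma_+,\gamma_-,\gamma_z\in\mathbb{R}$, $\mathcal{L}^\ddagger:\mathcal{M}_2\to\mathcal{M}_2$ is $\mathcal{L}^\ddagger(X)=\tfrac{i\omega}{2}[\sigma_z,X]+\gamma_+(\sigma_-X\sigma_+-\tfrac12\{\sigma_-\sigma_+,X\})+\gamma_-(\sigma_+X\sigma_--\tfrac12\{\sigma_+\sigma_-,X\})+\gamma_z(\sigma_zX\sigma_z-X)$, where $\sigma_x,\sigma_y,\sigma_z$ are the Pauli matrices and $\sigma_\pm=\frac12(\sigma_x\pm i\sigma_y)$. $\Gamma_T=\frac{\gamma_++\gamma_-}{2}+2\gamma_z$, $\Gamma_L=\gamma_++\gamma_-$. A unital Schwarz map on $\mathcal{M}_n$ is a linear map $\Phi$ with $\Phi(\mathbb{1})=\mathbb{1}$ and $\Phi(X^\dagger X)\ge\Phi(X)^\dagger\Phi(X)$ for all $X$. *)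

From mathcomp Require Import all_boot all_order all_algebra all_classical all_reals all_analysis.
From mathcomp Require Import complex.
Set Implicit Arguments. Unset Strict Implicit. Unset Printing Implicit Defensive.
Import Order.TTheory GRing.Theory Num.Theory numFieldNormedType.Exports.
Local Open Scope ring_scope.
Local Open Scope complex_scope.

Section Defs.
Variable R : realType.
Local Notation C := R[i].

Definition mx2 (a b c d : C) : 'M[C]_2 :=
  \matrix_(i < 2, j < 2)
    if (i : nat) == 0%N then (if (j : nat) == 0%N then a else b)
    else (if (j : nat) == 0%N then c else d).

Definition sigma_x : 'M[C]_2 := mx2 0 1 1 0.
Definition sigma_y : 'M[C]_2 := mx2 0 (- 'i) 'i 0.
Definition sigma_z : 'M[C]_2 := mx2 1 0 0 (-1).
Definition sigma_p : 'M[C]_2 := (2 : C)^-1 *: (sigma_x + 'i *: sigma_y).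
Definition sigma_m : 'M[C]_2 := (2 : C)^-1 *: (sigma_x - 'i *: sigma_y).

Definition adj m n (X : 'M[C]_(m, n)) : 'M[C]_(n, m) := map_mx conjc X^T.

Definition commut n (A B : 'M[C]_n) : 'M[C]_n := A * B - B * A.
Definition acommut n (A B : 'M[C]_n) : 'M[C]_n := A * B + B * A.

Definition Ldag (w gp gm gz : R) (X : 'M[C]_2) : 'M[C]_2 :=
  ('i * (w / 2)%:C) *: commut sigma_z X
  + gp%:C *: (sigma_m * X * sigma_p - (2 : C)^-1 *: acommut (sigma_m * sigma_p) X)
  + gm%:C *: (sigma_p * X * sigma_m - (2 : C)^-1 *: acommut (sigma_p * sigma_m) X)
  + gz%:C *: (sigma_z * X * sigma_z - X).

Definition GammaT (gp gm gz : R) : R := (gp + gm) / 2 + 2 * gz.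
Definition GammaL (gp gm : R) : R := gp + gm.

Definition csum (u : nat -> C) : C :=
  (limn (series (fun k => complex.Re (u k)))) +i* (limn (series (fun k => complex.Im (u k)))).

Definition expmap (t : R) (L : 'M[C]_2 -> 'M[C]_2) (X : 'M[C]_2) : 'M[C]_2 :=
  \matrix_(i < 2, j < 2) csum (fun k => ((t ^+ k / (k`!)%:R)%:C * (iter k L X) i j)).

(* positive semidefinite (complex order: 0 <= z means z real and nonnegative) *)
Definition psd n (A : 'M[C]_n) : Prop :=
  forall v : 'cV[C]_n, 0 <= (adj v *m A *m v) 0 0.

Definition unital_schwarz n (Phi : 'M[C]_n.+1 -> 'M[C]_n.+1) : Prop :=
  [/\ (forall (a : C) (X Y : 'M[C]_n.+1), Phi (a *: X + Y) = a *: Phi X + Phi Y),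
      Phi 1 = 1 &
      forall X : 'M[C]_n.+1, psd (Phi (adj X * X) - adj (Phi X) * Phi X)].

End Defs.

(* A unital Schwarz map satisfies Phi(X^* X)_jj >= (Re Phi(X)_kj)^2 on the diagonal.
   The generator [Ldag] acts on the diagonal of a 2x2 matrix by classical rate
   equations with rates gm and gp, and multiplies the off-diagonal entries by
   -Gamma_T +/- i w.  Expanding Phi_t = e^{tL} to first order at X = sigma_+ gives
     Phi_t(X^* X)_00 = t gm + O(t^2) >= 0,
     Phi_t(X^* X)_11 = 1 - t gp + O(t^2) >= (Re Phi_t(X)_01)^2 = 1 - 2 t Gamma_T + O(t^2),
   hence gm >= 0 and gp <= 2 Gamma_T as t -> 0+; sigma_- gives the symmetric pair.
   These four inequalities imply the bounds.  The O(t^2) remainders are uniform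
   because every entry of L^k(X) is bounded by M^k for a constant M. *)

From mathcomp Require Import all_boot all_order all_algebra all_classical all_reals all_analysis.
From mathcomp Require Import complex ring lra.
Set Implicit Arguments. Unset Strict Implicit. Unset Printing Implicit Defensive.
Import Order.TTheory GRing.Theory Num.Theory numFieldNormedType.Exports.
Local Open Scope ring_scope.
Local Open Scope complex_scope.

Section Preliminaries.
Variable R : realType.
Local Notation C := R[i].
Local Notation Re := (@complex.Re R).
Local Notation Im := (@complex.Im R).

Lemma ge0_from_affine_near0 (a K c : R) : 0 < c ->
  (forall t, 0 < t -> t <= c -> 0 <= a + K * t) -> 0 <= a.
Proof.
move=> c0 H; rewrite leNgt; apply/negP => a0.
have K1 : 0 < `|K| + 1 by rewrite ltr_wpDl.
pose t := Num.min c (- a / (`|K| + 1)).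
have t0 : 0 < t by rewrite lt_min c0 divr_gt0 // oppr_gt0.
have tK : t * (`|K| + 1) <= - a by rewrite -ler_pdivlMr // ge_min lexx orbT.
have tc : t <= c by rewrite ge_min lexx.
have := H t t0 tc; have := ler_norm K; nra.
Qed.

Lemma exp_series_first_order (g : nat -> R) (N t : R) :
  0 <= N -> 0 <= t -> 2 * (t * N) <= 1 -> (forall k, `|g k| <= N ^+ k) ->
  `|limn (series (fun k => t ^+ k / (k`!)%:R * g k)) - (g 0%N + t * g 1%N)|
    <= 2 * (t * N) ^+ 2.
Proof.
move=> N0 t0 tN gN; set h := fun k => _; set x := t * N.
have x0 : 0 <= x by rewrite mulr_ge0.
have x_half : 2 * x <= 1 by [].
have hx k : `|h k| <= x ^+ k.
  have fact_ge1 : 1 <= (k`!)%:R :> R by rewrite ler1n fact_gt0.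
  rewrite /h /x exprMn !normrM ger0_norm ?exprn_ge0 // -mulrA ler_wpM2l ?exprn_ge0 //.
  rewrite ger0_norm ?invr_ge0 ?ler0n // -[leRHS]mul1r.
  by apply: ler_pM; rewrite ?invr_ge0 ?invf_le1 ?(lt_le_trans ltr01).
clearbody x.
have cvh : cvgn (series h).
  apply: normed_cvg; apply: (@series_le_cvg _ _ (geometric 1 x)).
  - by move=> n; rewrite normr_ge0.
  - by move=> n; rewrite /geometric /= mul1r exprn_ge0.
  - by move=> n; rewrite /geometric /= mul1r.
  - by apply: is_cvg_geometric_series; rewrite ger0_norm //; lra.
(* the terms of index [k >= 2] are dominated by [x ^+ k] with [x <= 1/2] *)
have tail n : `|series h n.+2 - (g 0%N + t * g 1%N)| <= 2 * x ^+ 2 - 2 * x ^+ n.+2.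
  elim: n => [|n IH].
    rewrite !seriesSr /series /= big_geq // add0r /h /= expr0 expr1 !mul1r.
    rewrite (_ : 0`! = 1)%N // (_ : 1`! = 1)%N // invr1 mulr1 mul1r.
    by rewrite !subrr normr0.
  rewrite seriesSr addrAC; apply: le_trans (ler_normD _ _) _.
  have := hx n.+2; have := exprn_ge0 n.+2 x0; rewrite [x ^+ n.+3]exprS; nra.
have near_bound : \forall n \near \oo%classic,
    `|series h n - (g 0%N + t * g 1%N)| <= 2 * x ^+ 2.
  exists 2%N => // n /= n2; rewrite -(subnK n2) addn2.
  by apply: le_trans (tail _) _; rewrite gerDl oppr_le0 pmulr_rge0 ?exprn_ge0.
rewrite ler_norml; apply/andP; split.
- rewrite lerBrDr; apply: limr_ge => //.
  by apply: filterS near_bound => n; rewrite ler_norml; lra.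
- rewrite lerBlDr; apply: limr_le => //.
  by apply: filterS near_bound => n; rewrite ler_norml; lra.
Qed.

Lemma first_order_sqr_bounds (t K g h G p q r : R) : 0 < t ->
  `|p - t * g| <= K * t ^+ 2 -> `|q - (1 - t * h)| <= K * t ^+ 2 ->
  `|r - (1 - t * G)| <= K * t ^+ 2 -> 0 <= p -> r ^+ 2 <= q ->
  0 <= g + K * t /\ 0 <= 2 * G - h + (3 * K) * t.
Proof.
rewrite !ler_norml => t0 /andP[_ pg] /andP[_ qh] /andP[rG _] p0 rq.
have r_sqr : 2 * r - 1 <= r ^+ 2 by have := sqr_ge0 (r - 1); rewrite sqrrB1; lra.
split; rewrite -(pmulr_rge0 _ t0); nra.
Qed.

Lemma complexP (x y : C) : Re x = Re y -> Im x = Im y -> x = y.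
Proof. by case: x y => [a b] [c d] /= -> ->. Qed.

Lemma Re_conjcM (z : C) : Re (conjc z * z) = Re z ^+ 2 + Im z ^+ 2.
Proof. by case: z => a b /=; ring. Qed.

Lemma adj_delta_col n (j : 'I_n) : adj (delta_mx j 0 : 'cV[C]_n) = delta_mx 0 j.
Proof. by apply/matrixP => a b; rewrite !mxE conjc_nat andbC. Qed.

Lemma psd_Re_diag_ge0 n (A : 'M[C]_n) : psd A -> forall j, 0 <= Re (A j j).
Proof.
move=> psdA j; move: (psdA (delta_mx j 0)); rewrite adj_delta_col -rowE -colE !mxE.
by rewrite lecE => /andP[].
Qed.

Lemma unital_schwarz_Re_entry n (Phi : 'M[C]_n.+1 -> 'M[C]_n.+1) X (j k : 'I_n.+1) :
  unital_schwarz Phi -> Re (Phi X k j) ^+ 2 <= Re (Phi (adj X * X) j j).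
Proof.
case=> _ _ /(_ X) /psd_Re_diag_ge0 /(_ j); set Y := Phi X.
rewrite !mxE raddfD raddfN /= subr_ge0; apply: le_trans.
rewrite raddf_sum (bigD1 k) //= !mxE Re_conjcM -addrA lerDl.
by rewrite addr_ge0 ?sqr_ge0 ?sumr_ge0 // => i _; rewrite !mxE Re_conjcM addr_ge0 ?sqr_ge0.
Qed.

Lemma Re_expmap (t : R) (L : 'M[C]_2 -> 'M[C]_2) (Y : 'M[C]_2) (i j : 'I_2) :
  Re (expmap t L Y i j) = limn (series (fun k => t ^+ k / (k`!)%:R * Re (iter k L Y i j))).
Proof.
rewrite mxE /csum /=; congr (limn (series _)); apply: funext => k.
by case: (iter k L Y i j) => a b /=; ring.
Qed.

Lemma expmap_Re_first_order (t N : R) (L : 'M[C]_2 -> 'M[C]_2) (Y : 'M[C]_2) (i j : 'I_2) :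
  0 <= N -> 0 <= t -> 2 * (t * N) <= 1 -> (forall k, `|Re (iter k L Y i j)| <= N ^+ k) ->
  `|Re (expmap t L Y i j) - (Re (Y i j) + t * Re (L Y i j))| <= 2 * (t * N) ^+ 2.
Proof.
by rewrite Re_expmap; apply: (exp_series_first_order (g := fun k => Re (iter k L Y i j))).
Qed.

(* real-valued and submultiplicative, unlike the modulus [`|z| : C] *)
Definition normc_l1 (z : C) : R := `|Re z| + `|Im z|.

Lemma normc_l1_ge0 (z : C) : 0 <= normc_l1 z.
Proof. by rewrite addr_ge0. Qed.

Lemma normc_l1_0 : normc_l1 (0 : C) = 0.
Proof. by rewrite /normc_l1 /= normr0 addr0. Qed.

Lemma normc_l1_1 : normc_l1 (1 : C) = 1.
Proof. by rewrite /normc_l1 /= normr1 normr0 addr0. Qed.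

Lemma normc_l1M (u v : C) : normc_l1 (u * v) <= normc_l1 u * normc_l1 v.
Proof.
case: u v => [a b] [c d]; rewrite /normc_l1 /=.
have := ler_normB (a * c) (b * d); have := ler_normD (a * d) (b * c).
rewrite !normrM; have := normr_ge0 a; have := normr_ge0 b.
have := normr_ge0 c; have := normr_ge0 d; nra.
Qed.

Lemma Re_le_normc_l1 (z : C) : `|Re z| <= normc_l1 z.
Proof. by rewrite lerDl. Qed.

Lemma normc_l1X (z : C) k : normc_l1 (z ^+ k) <= normc_l1 z ^+ k.
Proof.
elim: k => [|k IH]; first by rewrite normc_l1_1.
rewrite !exprS; apply: le_trans (normc_l1M _ _) _.
by rewrite ler_wpM2l ?normc_l1_ge0.
Qed.

Lemma normc_l1_conjc (z : C) : normc_l1 (conjc z) = normc_l1 z.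
Proof. by case: z => a b; rewrite /normc_l1 /= normrN. Qed.

End Preliminaries.

Section TwoByTwo.
Variable R : realType.
Local Notation C := R[i].

Lemma mx2E (a b c d : C) (i j : 'I_2) : mx2 a b c d i j =
  if (i : nat) == 0%N then (if (j : nat) == 0%N then a else b)
  else (if (j : nat) == 0%N then c else d).
Proof. by rewrite mxE. Qed.

Lemma mx2_add (a b c d a' b' c' d' : C) :
  mx2 a b c d + mx2 a' b' c' d' = mx2 (a + a') (b + b') (c + c') (d + d').
Proof. by apply/matrixP => -[[|[|//]] ?] [[|[|//]] ?]; rewrite !mxE. Qed.

Lemma mx2_opp (a b c d : C) : - mx2 a b c d = mx2 (- a) (- b) (- c) (- d).
Proof. by apply/matrixP => -[[|[|//]] ?] [[|[|//]] ?]; rewrite !mxE. Qed.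

Lemma mx2_scale (k a b c d : C) : k *: mx2 a b c d = mx2 (k * a) (k * b) (k * c) (k * d).
Proof. by apply/matrixP => -[[|[|//]] ?] [[|[|//]] ?]; rewrite !mxE. Qed.

Lemma mx2_mul (a b c d a' b' c' d' : C) : mx2 a b c d * mx2 a' b' c' d' =
  mx2 (a * a' + b * c') (a * b' + b * d') (c * a' + d * c') (c * b' + d * d').
Proof.
apply/matrixP => -[[|[|//]] ?] [[|[|//]] ?];
  by rewrite !mxE !big_ord_recl big_ord0 !mxE /= addr0.
Qed.

Lemma adj_mx2 (a b c d : C) : adj (mx2 a b c d) = mx2 (conjc a) (conjc c) (conjc b) (conjc d).
Proof. by apply/matrixP => -[[|[|//]] ?] [[|[|//]] ?]; rewrite !mxE. Qed.

Lemma mulcii : 'i * 'i = -1 :> C.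
Proof. by rewrite -expr2 sqr_i. Qed.

Lemma sigma_pE : sigma_p R = mx2 0 1 0 0.
Proof.
rewrite /sigma_p /sigma_x /sigma_y !(mx2_scale, mx2_add).
have two_neq0 : (2 : C) != 0 by rewrite pnatr_eq0.
by congr mx2; rewrite ?mulrN ?mulcii; field.
Qed.

Lemma sigma_mE : sigma_m R = mx2 0 0 1 0.
Proof.
rewrite /sigma_m /sigma_x /sigma_y !(mx2_scale, mx2_opp, mx2_add).
have two_neq0 : (2 : C) != 0 by rewrite pnatr_eq0.
by congr mx2; rewrite ?mulrN ?mulcii; field.
Qed.

Definition coherence_rate (w gp gm gz : R) : C := 'i * w%:C - (GammaT gp gm gz)%:C.

Lemma LdagE w gp gm gz a b c d :
  Ldag w gp gm gz (mx2 a b c d) =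
  mx2 (gm%:C * (d - a)) (coherence_rate w gp gm gz * b)
      (conjc (coherence_rate w gp gm gz) * c) (gp%:C * (a - d)).
Proof.
have -> : conjc (coherence_rate w gp gm gz) = - 'i * w%:C - (GammaT gp gm gz)%:C.
  by apply: complexP; rewrite /=; ring.
rewrite /Ldag sigma_pE sigma_mE /sigma_z /commut /acommut /coherence_rate /GammaT.
rewrite !(mx2_mul, mx2_add, mx2_opp, mx2_scale).
have two_neq0 : (2 : C) != 0 by rewrite pnatr_eq0.
rewrite !rmorphD !rmorphM /= !rmorphV ?unitfE ?pnatr_eq0 //= !rmorph_nat.
by congr mx2; field.
Qed.

(* the restriction of [Ldag] to the diagonal entries [(a, d)] *)
Definition diag_step (gp gm : R) (p : R * R) : R * R :=
  (gm * (p.2 - p.1), gp * (p.1 - p.2)).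

Lemma iter_LdagE w gp gm gz k (a d : R) (b c : C) :
  iter k (Ldag w gp gm gz) (mx2 a%:C b c d%:C) =
  mx2 ((iter k (diag_step gp gm) (a, d)).1)%:C (coherence_rate w gp gm gz ^+ k * b)
      (conjc (coherence_rate w gp gm gz) ^+ k * c) ((iter k (diag_step gp gm) (a, d)).2)%:C.
Proof.
elim: k => [|k IH]; first by rewrite /= !expr0 !mul1r.
by rewrite iterS IH LdagE /= -!rmorphB -!rmorphM !exprS !mulrA.
Qed.

Lemma diag_step_bound gp gm k (a d : R) :
  `|(iter k (diag_step gp gm) (a, d)).1| + `|(iter k (diag_step gp gm) (a, d)).2|
   <= (`|gm| + `|gp|) ^+ k * (`|a| + `|d|).
Proof.
elim: k => [|k IH]; first by rewrite expr0 mul1r.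
rewrite iterS exprS -mulrA; set p := iter k _ _.
apply: le_trans (ler_wpM2l (addr_ge0 (normr_ge0 gm) (normr_ge0 gp)) IH).
rewrite /diag_step /= !normrM.
have := ler_normB p.2 p.1; have := ler_normB p.1 p.2.
have := normr_ge0 gm; have := normr_ge0 gp; nra.
Qed.

End TwoByTwo.

Section SchwarzGenerator.
Variables (R : realType) (w gp gm gz : R).
Local Notation C := R[i].
Local Notation Re := (@complex.Re R).
Local Notation L := (Ldag w gp gm gz).
Local Notation GT := (GammaT gp gm gz).
Local Notation M := (`|gm| + `|gp| + `|GT| + `|w|).

Lemma normc_l1_coherence_rate :
  normc_l1 (coherence_rate w gp gm gz) = `|GT| + `|w|.
Proof.
rewrite /normc_l1 (_ : Re _ = - GT) ?normrN; last by rewrite /=; ring.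
by congr (_ + `|_|); rewrite /=; ring.
Qed.

Lemma iter_Ldag_Re_bound (a d : R) (b c : C) k (i j : 'I_2) :
  `|a| + `|d| <= 1 -> normc_l1 b <= 1 -> normc_l1 c <= 1 ->
  `|Re (iter k L (mx2 a%:C b c d%:C) i j)| <= M ^+ k.
Proof.
move=> ad b1 c1; rewrite iter_LdagE mxE.
have M_ge0 : 0 <= M by rewrite !addr_ge0.
have diag_le : `|(iter k (diag_step gp gm) (a, d)).1| + `|(iter k (diag_step gp gm) (a, d)).2|
    <= M ^+ k.
  apply: le_trans (diag_step_bound _ _ _ _ _) _; rewrite -[leRHS]mulr1.
  apply: ler_pM; rewrite ?exprn_ge0 ?addr_ge0 //.
  by rewrite lerXn2r ?nnegrE ?addr_ge0 //; have := normr_ge0 GT; have := normr_ge0 w; lra.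
have off_le z u : normc_l1 z <= M -> normc_l1 u <= 1 -> `|Re (z ^+ k * u)| <= M ^+ k.
  move=> zM u1; apply: le_trans (Re_le_normc_l1 _) _; apply: le_trans (normc_l1M _ _) _.
  rewrite -[leRHS]mulr1; apply: ler_pM; rewrite ?normc_l1_ge0 ?exprn_ge0 //.
  apply: le_trans (normc_l1X _ _) _.
  by rewrite lerXn2r ?nnegrE ?normc_l1_ge0.
have rate_le : normc_l1 (coherence_rate w gp gm gz) <= M.
  by rewrite normc_l1_coherence_rate; have := normr_ge0 gm; have := normr_ge0 gp; lra.
have rate_conj_le : normc_l1 (conjc (coherence_rate w gp gm gz)) <= M.
  by rewrite normc_l1_conjc.
move: (coherence_rate _ _ _ _) (conjc _) rate_le rate_conj_le => z z' zM z'M.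
have := normr_ge0 (iter k (diag_step gp gm) (a, d)).1.
have := normr_ge0 (iter k (diag_step gp gm) (a, d)).2.
by case: i j => [[|[|//]] ?] [[|[|//]] ?] /= *; [lra | exact: off_le | exact: off_le | lra].
Qed.

Lemma expmap_Ldag_Re_first_order t (a d : R) (b c : C) (i j : 'I_2) v :
  0 <= t -> 2 * (t * M) <= 1 ->
  `|a| + `|d| <= 1 -> normc_l1 b <= 1 -> normc_l1 c <= 1 ->
  Re (mx2 a%:C b c d%:C i j) + t * Re (L (mx2 a%:C b c d%:C) i j) = v ->
  `|Re (expmap t L (mx2 a%:C b c d%:C) i j) - v| <= (2 * M ^+ 2) * t ^+ 2.
Proof.
move=> t0 tM ad b1 c1 <-; rewrite (_ : _ * t ^+ 2 = 2 * (t * M) ^+ 2); last by ring.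
by apply: expmap_Re_first_order; rewrite ?addr_ge0 // => k; apply: iter_Ldag_Re_bound.
Qed.

Hypothesis schwarz : forall t : R, 0 <= t -> unital_schwarz (expmap t L).

Lemma schwarz_sigma_p t : 0 < t -> 2 * (t * M) <= 1 ->
  0 <= gm + (2 * M ^+ 2) * t /\ 0 <= 2 * GT - gp + (3 * (2 * M ^+ 2)) * t.
Proof.
move=> t0 tM; have S := schwarz (ltW t0).
have E01 : sigma_p R = mx2 0%:C 1 0 0%:C := sigma_pE R.
have E11 : adj (sigma_p R) * sigma_p R = mx2 0%:C 0 0 1%:C.
  by rewrite E01 adj_mx2 mx2_mul; congr mx2; apply: complexP; rewrite /=; ring.
have S00 := unital_schwarz_Re_entry (sigma_p R) 0 0 S.
have S11 := unital_schwarz_Re_entry (sigma_p R) 1 0 S.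
rewrite E11 E01 in S00 S11.
apply: (first_order_sqr_bounds t0 _ _ _ (le_trans (sqr_ge0 _) S00) S11);
  apply: (expmap_Ldag_Re_first_order (ltW t0) tM);
  rewrite ?normc_l1_0 ?normc_l1_1 ?normr0 ?normr1 ?addr0 ?add0r //;
  by rewrite LdagE !mx2E /=; ring.
Qed.

Lemma schwarz_sigma_m t : 0 < t -> 2 * (t * M) <= 1 ->
  0 <= gp + (2 * M ^+ 2) * t /\ 0 <= 2 * GT - gm + (3 * (2 * M ^+ 2)) * t.
Proof.
move=> t0 tM; have S := schwarz (ltW t0).
have E10 : sigma_m R = mx2 0%:C 0 1 0%:C := sigma_mE R.
have E00 : adj (sigma_m R) * sigma_m R = mx2 1%:C 0 0 0%:C.
  by rewrite E10 adj_mx2 mx2_mul; congr mx2; apply: complexP; rewrite /=; ring.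
have S11 := unital_schwarz_Re_entry (sigma_m R) 1 1 S.
have S00 := unital_schwarz_Re_entry (sigma_m R) 0 1 S.
rewrite E00 E10 in S00 S11.
apply: (first_order_sqr_bounds t0 _ _ _ (le_trans (sqr_ge0 _) S11) S00);
  apply: (expmap_Ldag_Re_first_order (ltW t0) tM);
  rewrite ?normc_l1_0 ?normc_l1_1 ?normr0 ?normr1 ?addr0 ?add0r //;
  by rewrite LdagE !mx2E /=; ring.
Qed.

Lemma Ldag_schwarz_rates : [/\ 0 <= gm, 0 <= gp, gp <= 2 * GT & gm <= 2 * GT].
Proof.
have M1 : 0 < 2 * M + 1 by rewrite ltr_wpDl ?mulr_ge0 ?addr_ge0.
pose c := 1 / (2 * M + 1).
have c0 : 0 < c by rewrite divr_gt0.
have small t : 0 < t -> t <= c -> 2 * (t * M) <= 1.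
  by move=> t0; rewrite ler_pdivlMr //; nra.
have near0 a K : (forall t, 0 < t -> 2 * (t * M) <= 1 -> 0 <= a + K * t) -> 0 <= a.
  by move=> H; apply: (ge0_from_affine_near0 c0) => t t0 /(small t t0); apply: H.
split.
- by apply: (near0 _ (2 * M ^+ 2)) => t t0 /(schwarz_sigma_p t0) [].
- by apply: (near0 _ (2 * M ^+ 2)) => t t0 /(schwarz_sigma_m t0) [].
- by rewrite -subr_ge0; apply: (near0 _ (3 * (2 * M ^+ 2))) => t t0 /(schwarz_sigma_p t0) [].
- by rewrite -subr_ge0; apply: (near0 _ (3 * (2 * M ^+ 2))) => t t0 /(schwarz_sigma_m t0) [].
Qed.

End SchwarzGenerator.

Theorem mainTheorem10 (R : realType) (w gp gm gz : R) :
  (forall t : R, 0 <= t -> unital_schwarz (expmap t (Ldag w gp gm gz))) ->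
  let Gamma := 2 * GammaT gp gm gz + GammaL gp gm in
  [/\ GammaT gp gm gz <= 2 / 3 * Gamma,
      GammaL gp gm <= 2 / 3 * Gamma &
      GammaL gp gm <= 4 * GammaT gp gm gz].
Proof.
move=> schwarz Gamma; have [] := Ldag_schwarz_rates schwarz.
by rewrite /Gamma /GammaL /GammaT; split; lra.
Qed.
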